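(* A finite triangle-free simple graph $G$ admits a two-acyclic factorization system if and only if its chromatic number satisfies $\chi(G)\le 3$.
   Context: Directed (multi)graphs are assumed to have a loop at every vertex. For a directed multigraph $(G,\to)$, form $G_A$ by relabelling arrows: an arrow $x\to y$ is of type $x\hookrightarrow y$ if for every $z$ with $z\to x$ there is an arrow $z\to y$; it is of type $x\twoheadrightarrow y$ if for every $z$ with $y\to z$ there is an arrow $x\to z$; if both hold it is counted as both types; otherwise it remains a plain arrow. $(G,\to)$ forms a two-acyclic factorization system if in $G_A$: (i) there are no $x\twoheadrightarrow y\twoheadrightarrow x$ and no $x\hookrightarrow y\hookrightarrow x$ with $x\ne y$; (ii) there is no $x\twoheadrightarrow y\hookrightarrow x$ with $x\neq y$; (iii) for every arrow $x\to z$ there exists $y$ with $x\twoheadrightarrow y\hookrightarrow z$. An undirected (multi)graph admits a two-acyclic factorization system if some orientation of its edges forms one. *)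

From mathcomp Require Import all_boot.
Set Implicit Arguments. Unset Strict Implicit. Unset Printing Implicit Defensive.

(* A finite simple graph: vertex type T : finType, adjacency e : rel T,
   symmetric and irreflexive. *)

Definition triangle_free (T : finType) (e : rel T) : Prop :=
  forall x y z : T, ~ [/\ e x y, e y z & e x z].

(* k-colourability (proper colourings ignore loops; irrelevant for simple graphs). *)
Definition colorableb (T : finType) (e : rel T) (k : nat) : bool :=
  [exists f : {ffun T -> 'I_k},
     [forall x, forall y, ((x != y) && e x y) ==> (f x != f y)]].

Lemma colorable_card (T : finType) (e : rel T) : exists k, colorableb e k.
Proof.
exists #|T|; apply/existsP; exists [ffun x => enum_rank x].
apply/forallP => x; apply/forallP => y; apply/implyP => /andP [nxy _].
rewrite !ffunE; apply: contra nxy => /eqP H.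
by apply/eqP; apply: enum_rank_inj.
Qed.

Definition chromatic_number (T : finType) (e : rel T) : nat :=
  ex_minn (colorable_card e).

(* Directed graphs with a loop at every vertex, as reflexive relations r.
   Arrow types in G_A: *)
Definition mono_arrow (T : finType) (r : rel T) (x y : T) : Prop :=
  r x y /\ forall z, r z x -> r z y.
Definition epi_arrow (T : finType) (r : rel T) (x y : T) : Prop :=
  r x y /\ forall z, r y z -> r x z.

Definition two_acyclic_fs (T : finType) (r : rel T) : Prop :=
  [/\ (forall x y, epi_arrow r x y -> epi_arrow r y x -> x = y),
      (forall x y, mono_arrow r x y -> mono_arrow r y x -> x = y),
      (forall x y, epi_arrow r x y -> mono_arrow r y x -> x = y) &
      (forall x z, r x z -> exists y, epi_arrow r x y /\ mono_arrow r y z)].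

Definition orientation (T : finType) (e o : rel T) : Prop :=
  [/\ (forall x y, o x y -> e x y),
      (forall x y, e x y -> o x y || o y x) &
      (forall x y, ~ (o x y && o y x))].

Definition with_loops (T : finType) (o : rel T) : rel T :=
  fun x y => (x == y) || o x y.

Definition admits_two_acyclic_fs (T : finType) (e : rel T) : Prop :=
  exists o : rel T, orientation e o /\ two_acyclic_fs (with_loops o).

(* In an oriented triangle-free graph with loops, the middle vertex of a
   factorization x ->> w >-> y of an arrow x -> y must be x or y, for otherwise
   x, w, y would be a triangle.  If it is x, the arrow x >-> y forces every
   in-neighbour of x to be adjacent to y, so again by triangle-freeness x is a
   source; dually, if it is y then y is a sink.  Hence every arrow leaves a
   source or enters a sink, and colouring sources 0, the remaining sinks 2 and
   everything else 1 is proper.  Conversely, orienting the edges of a proper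
   3-colouring from the smaller colour to the larger one gives an acyclic
   orientation in which every arrow leaves colour 0 (a source) or enters
   colour 2 (a sink), which yields the required factorizations. *)

From mathcomp Require Import all_boot zify.

Set Implicit Arguments.
Unset Strict Implicit.
Unset Printing Implicit Defensive.

Definition source (T : finType) (o : rel T) (x : T) : bool := [forall w, ~~ o w x].
Definition sink (T : finType) (o : rel T) (x : T) : bool := [forall w, ~~ o x w].

Section Colourings.

Variables (T : finType) (e : rel T).

Lemma colorable_leq (k m : nat) : k <= m -> colorableb e k -> colorableb e m.
Proof.
move=> le_km /existsP [f /forallP f_proper]; apply/existsP.
exists [ffun x => widen_ord le_km (f x)].
apply/forallP => x; apply/forallP => y; apply/implyP => exy.
by rewrite !ffunE -val_eqE /=; apply: (implyP (forallP (f_proper x) y)).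
Qed.

Lemma chromatic_number_leq (k : nat) : chromatic_number e <= k <-> colorableb e k.
Proof.
rewrite /chromatic_number; case: ex_minnP => m col_m min_m.
by split=> [le_mk | col_k]; [apply: colorable_leq le_mk col_m | apply: min_m].
Qed.

Lemma colorableP (k : nat) : irreflexive e ->
  reflect (exists f : T -> 'I_k, forall x y, e x y -> f x != f y) (colorableb e k).
Proof.
move=> e_irr; apply: (iffP existsP) => [[f /forallP f_proper] | [f f_proper]].
  exists f => x y exy; have /forallP/(_ y)/implyP := f_proper x; apply.
  by rewrite exy andbT; apply: contraTneq exy => ->; rewrite e_irr.
exists [ffun x => f x]; apply/forallP => x; apply/forallP => y.
by apply/implyP => /andP [_ exy]; rewrite !ffunE f_proper.
Qed.

End Colourings.

Section ReflexiveArrows.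

Variables (T : finType) (r : rel T).

Lemma epi_arrow_refl : reflexive r -> forall x, epi_arrow r x x.
Proof. by move=> r_refl x; split. Qed.

Lemma mono_arrow_refl : reflexive r -> forall x, mono_arrow r x x.
Proof. by move=> r_refl x; split. Qed.

Lemma two_acyclic_fs_antisym :
  (forall x y, r x y -> r y x -> x = y) ->
  (forall x z, r x z -> exists y, epi_arrow r x y /\ mono_arrow r y z) ->
  two_acyclic_fs r.
Proof. by move=> r_anti r_fact; split=> // x y [rxy _] [ryx _]; apply: r_anti. Qed.

End ReflexiveArrows.

Section WithLoops.

Variables (T : finType) (o : rel T).
Local Notation r := (with_loops o).

Lemma with_loops_refl : reflexive r.
Proof. by move=> x; rewrite /with_loops eqxx. Qed.

Lemma with_loops_antisym :
  (forall x y, ~ (o x y && o y x)) -> forall x y, r x y -> r y x -> x = y.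
Proof.
move=> o_asym x y /orP [/eqP // | oxy] /orP [/eqP // | oyx].
by case: (o_asym x y); rewrite oxy oyx.
Qed.

Lemma mono_arrow_from_source x z : source o x -> r x z -> mono_arrow r x z.
Proof.
move=> /forallP src_x rxz; split=> // w /orP [/eqP -> // | owx].
by move: (src_x w); rewrite owx.
Qed.

Lemma epi_arrow_to_sink x z : sink o z -> r x z -> epi_arrow r x z.
Proof.
move=> /forallP snk_z rxz; split=> // w /orP [/eqP <- // | ozw].
by move: (snk_z w); rewrite ozw.
Qed.

End WithLoops.

Section TriangleFreeOrientation.

Variables (T : finType) (e o : rel T).
Hypotheses (tf : triangle_free e) (e_o : orientation e o).
Local Notation r := (with_loops o).

Let o_sub_e x y : o x y -> e x y.
Proof. by case: e_o => + _ _; apply. Qed.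

Let o_asym x y : o x y -> o y x -> False.
Proof. by case: e_o => _ _ asym oxy oyx; apply: (asym x y); rewrite oxy oyx. Qed.

Lemma factorization_endpoint x w y :
  o x y -> r x w -> r w y -> w = x \/ w = y.
Proof.
move=> oxy /orP [/eqP -> | oxw]; first by left.
move=> /orP [/eqP -> | owy]; first by right.
by case: (@tf x w y); split; apply: o_sub_e.
Qed.

Lemma mono_arrow_source x y : o x y -> mono_arrow r x y -> source o x.
Proof.
move=> oxy [_ mono_xy]; apply/forallP => z; apply/negP => ozx.
have /orP [/eqP zy | ozy] : r z y by apply: mono_xy; rewrite /with_loops ozx orbT.
  by move: ozx; rewrite zy => /(o_asym oxy).
by case: (@tf z x y); split; apply: o_sub_e.
Qed.

Lemma epi_arrow_sink x y : o x y -> epi_arrow r x y -> sink o y.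
Proof.
move=> oxy [_ epi_xy]; apply/forallP => z; apply/negP => oyz.
have /orP [/eqP xz | oxz] : r x z by apply: epi_xy; rewrite /with_loops oyz orbT.
  by move: oyz; rewrite -xz => /(o_asym oxy).
by case: (@tf x y z); split; apply: o_sub_e.
Qed.

Lemma arrow_source_or_sink :
  (forall x z, r x z -> exists y, epi_arrow r x y /\ mono_arrow r y z) ->
  forall x y, o x y -> source o x \/ sink o y.
Proof.
move=> r_fact x y oxy.
have [w [epi_xw mono_wy]] := r_fact x y (introT orP (or_intror oxy)).
case: (factorization_endpoint oxy epi_xw.1 mono_wy.1) => [wx | wy].
  by left; apply: (mono_arrow_source oxy); rewrite -wx.
by right; apply: (epi_arrow_sink oxy); rewrite -wy.
Qed.

End TriangleFreeOrientation.

Section SourceSinkColouring.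

Variables (T : finType) (e o : rel T).

Definition source_sink_colour (x : T) : 'I_3 :=
  if source o x then ord0 else if sink o x then ord_max else Ordinal (isT : 1 < 3).

Lemma source_sink_colour_proper x y :
  o x y -> source o x \/ sink o y -> source_sink_colour x != source_sink_colour y.
Proof.
move=> oxy src_or_snk; rewrite /source_sink_colour.
have /negbTE -> : ~~ source o y by apply/forallP => /(_ x); rewrite oxy.
have /negbTE -> : ~~ sink o x by apply/forallP => /(_ y); rewrite oxy.
by case: src_or_snk => ->; case: ifP.
Qed.

Lemma colorable3_source_or_sink :
  irreflexive e -> orientation e o ->
  (forall x y, o x y -> source o x \/ sink o y) -> colorableb e 3.
Proof.
move=> e_irr [_ e_o _] src_or_snk; apply/colorableP => //.
exists source_sink_colour => x y /e_o /orP [oxy | oyx].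
  exact: source_sink_colour_proper oxy (src_or_snk _ _ oxy).
by rewrite eq_sym; apply: source_sink_colour_proper oyx (src_or_snk _ _ oyx).
Qed.

End SourceSinkColouring.

Section ColourOrientation.

Variables (T : finType) (e : rel T).

Definition colour_orientation (k : nat) (f : T -> 'I_k) : rel T :=
  [rel x y | e x y && (f x < f y)].

Lemma colour_orientationP (k : nat) (f : T -> 'I_k) :
  symmetric e -> (forall x y, e x y -> f x != f y) ->
  orientation e (colour_orientation f).
Proof.
move=> e_sym f_proper; split=> [x y /andP [] // | x y exy | x y].
  by rewrite /colour_orientation /= exy e_sym exy -neq_ltn f_proper.
by rewrite /colour_orientation /= => /andP [/andP [_ lt_xy] /andP [_ lt_yx]]; lia.
Qed.

Lemma colour_orientation_two_acyclic (f : T -> 'I_3) :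
  two_acyclic_fs (with_loops (colour_orientation f)).
Proof.
rewrite /colour_orientation; set o := [rel x y | e x y && (f x < f y)].
apply: two_acyclic_fs_antisym.
  by apply: with_loops_antisym => x y /andP [/andP [_ ?] /andP [_ ?]]; lia.
move=> x z /orP [/eqP <- | oxz].
  by exists x; split; [apply: epi_arrow_refl | apply: mono_arrow_refl];
    apply: with_loops_refl.
have rxz : with_loops o x z by rewrite /with_loops oxz orbT.
have [fx0 | fx_pos] := posnP (f x).
  exists x; split; first by apply/epi_arrow_refl/with_loops_refl.
  by apply: mono_arrow_from_source => //; apply/forallP => w; rewrite /= fx0 ltn0 andbF.
exists z; split; last by apply/mono_arrow_refl/with_loops_refl.
apply: epi_arrow_to_sink => //; apply/forallP => w; apply/negP => /andP [_].
by move: oxz => /andP [_]; have := ltn_ord (f w); lia.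
Qed.

End ColourOrientation.

Theorem proposition3p41 (T : finType) (e : rel T)
  (e_sym : symmetric e) (e_irr : irreflexive e) (tf : triangle_free e) :
  admits_two_acyclic_fs e <-> chromatic_number e <= 3.
Proof.
rewrite chromatic_number_leq; split.
  move=> [o [e_o [_ _ _ r_fact]]].
  exact: colorable3_source_or_sink e_irr e_o (arrow_source_or_sink tf e_o r_fact).
move=> /(colorableP _ e_irr) [f f_proper].
exists (colour_orientation e f); split; first exact: colour_orientationP.
exact: colour_orientation_two_acyclic.
Qed.
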